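(* Let $q$ be a prime power, $m,s\ge1$, $n=n_1+\dots+n_\ell$ with all $n_i>0$, and let $\mathcal{C}\subseteq\mathbb{F}_{q^m}^n$ be an $\mathbb{F}_{q^m}$-linear code of dimension $k$ and minimum sum-rank distance $d$ (w.r.t. the partition $(n_1,\dots,n_\ell)$), with parity-check matrix $\mathbf{H}=(\mathbf{H}^{(1)}\mid\dots\mid\mathbf{H}^{(\ell)})\in\mathbb{F}_{q^m}^{(n-k)\times n}$, $\mathbf{H}^{(i)}\in\mathbb{F}_{q^m}^{(n-k)\times n_i}$. Let $\mathbf{E}=(\mathbf{E}^{(1)}\mid\dots\mid\mathbf{E}^{(\ell)})\in\mathbb{F}_{q^m}^{s\times n}$ with $\mathbf{E}^{(i)}\in\mathbb{F}_{q^m}^{s\times n_i}$, $\operatorname{rk}_q(\mathbf{E}^{(i)})=t_i$, and sum-rank weight $t=\sum_it_i\le d-2$. Let $\mathbf{S}=\mathbf{H}\mathbf{E}^\top$, let $\mathbf{P}\in\mathbb{F}_{q^m}^{(n-k)\times(n-k)}$ be invertible with $\mathbf{P}\mathbf{S}$ in row-echelon form, and let $\mathbf{H}_{\mathrm{sub}}=(\mathbf{H}_{\mathrm{sub}}^{(1)}\mid\dots\mid\mathbf{H}_{\mathrm{sub}}^{(\ell)})$ be the submatrix of $\mathbf{P}\mathbf{H}$ formed by the rows corresponding to the zero rows of $\mathbf{P}\mathbf{S}$ (with $\mathbf{H}_{\mathrm{sub}}^{(i)}$ having $n_i$ columns). If $s\ge t$ and $\operatorname{rk}_{q^m}(\mathbf{E})=t$,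 then for all $i\in[1:\ell]$, $$\mathcal{R}_q(\mathbf{E}^{(i)})=\ker_r\big(\operatorname{ext}(\mathbf{H}_{\mathrm{sub}}^{(i)})\big)_q .$$
   Context: Fix an ordered basis $\mathbf{b}$ of $\mathbb{F}_{q^m}$ over $\mathbb{F}_q$; $\operatorname{ext}(\alpha)\in\mathbb{F}_q^m$ is the coordinate column vector of $\alpha\in\mathbb{F}_{q^m}$ w.r.t. $\mathbf{b}$, applied entrywise to matrices (an $a\times b$ matrix over $\mathbb{F}_{q^m}$ becomes an $am\times b$ matrix over $\mathbb{F}_q$). $\operatorname{rk}_q(\mathbf{X}):=\operatorname{rk}(\operatorname{ext}(\mathbf{X}))$ over $\mathbb{F}_q$; $\operatorname{rk}_{q^m}$ is the rank over $\mathbb{F}_{q^m}$. The sum-rank weight of $\mathbf{x}=(\mathbf{x}^{(1)}\mid\dots\mid\mathbf{x}^{(\ell)})$ is $\sum_i\operatorname{rk}_q(\mathbf{x}^{(i)})$, the sum-rank distance is the weight of the difference, and $d$ is the minimum sum-rank distance between distinct codewords. $\mathcal{R}_q(\mathbf{X})$ denotes the $\mathbb{F}_q$-row space of $\operatorname{ext}(\mathbf{X})$. For a matrix $\mathbf{M}$ over $\mathbb{F}_q$ with $N$ columns, $\ker_r(\mathbf{M})_q=\{\mathbf{v}\in\mathbb{F}_q^N:\mathbf{M}\mathbf{v}^\top=\mathbf{0}\}$. *)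

From HB Require Import structures.
From mathcomp Require Import all_boot all_order all_algebra all_field.
Set Implicit Arguments. Unset Strict Implicit. Unset Printing Implicit Defensive.
Import GRing.Theory.
Local Open Scope ring_scope.

(* F = F_q (any finite field), L = F_{q^m} a field extension of F,
   b an ordered F-basis of L (an m-tuple). *)
Section SumRank.
Variables (F : finFieldType) (L : fieldExtType F) (m : nat) (b : m.-tuple L).

(* ext X : entrywise expansion of X into coordinate column vectors w.r.t. b;
   an a x c matrix over L becomes an (a*m) x c matrix over F
   (row block i = coordinates of row i of X). *)
Definition ext a c (X : 'M[L]_(a, c)) : 'M[F]_(\sum_(i < a) m, c) :=
  mxcol (fun i : 'I_a => \matrix_(l < m, j < c) coord b l (X i j)).

Definition rkq a c (X : 'M[L]_(a, c)) : nat := \rank (ext X).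

Variables (ell : nat) (ns : 'I_ell -> nat).

Definition sr_weight (x : 'rV[L]_(\sum_i ns i)) : nat :=
  (\sum_(i < ell) rkq (submxrow x i))%N.

Definition sr_dist (x y : 'rV[L]_(\sum_i ns i)) : nat := sr_weight (x - y).

Definition min_sr_dist (C : pred 'rV[L]_(\sum_i ns i)) (d : nat) : Prop :=
  (exists x y, [/\ C x, C y, x != y & sr_dist x y = d]) /\
  (forall x y, C x -> C y -> x != y -> (d <= sr_dist x y)%N).

End SumRank.

Definition row_echelon (K : fieldType) r c (A : 'M[K]_(r, c)) : Prop :=
  forall i j : 'I_r, (i < j)%N -> row j A != 0 ->
    exists k : 'I_c, A i k != 0 /\ (forall k' : 'I_c, (k' <= k)%N -> A j k' = 0).

Definition zero_rows (K : fieldType) r c (A : 'M[K]_(r, c)) : {set 'I_r} :=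
  [set j | row j A == 0].

Definition sub_rows (K : fieldType) r c (Z : {set 'I_r}) (M : 'M[K]_(r, c))
  : 'M[K]_(#|Z|, c) := rowsub (fun k : 'I_#|Z| => enum_val k) M.

From HB Require Import structures.
From mathcomp Require Import all_boot all_order all_algebra all_field.
Import GRing.Theory.
Local Open Scope ring_scope.

(* For a matrix in row-echelon form, the column space consists exactly of the
   vectors vanishing on its zero rows; hence [Hsub *m u = 0] iff [H *m u] lies
   in the column space of [H *m E^T].
   If [v] lies in the F-row space of [ext E^(i)], then [v] lies in the L-span
   of the expansions of all blocks (each lifted to L and put in its block).
   That span contains the rows of [E] and has dimension at most
   [t = rk_{q^m} E], so it is the row space of [E], which [Hsub] annihilates.
   Conversely, if [ext Hsub^(i)] kills [v], the word [x] carrying [v] in block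
   [i] satisfies [H x^T = H E^T w^T] for some [w], so [x - w E] is a codeword
   of sum-rank weight at most [1 + t < d]; thus [v = w E^(i)], whose expansion
   has its rows in the F-row space of [ext E^(i)]. *)

Set Implicit Arguments. Unset Strict Implicit. Unset Printing Implicit Defensive.

Section RowSpaces.
Variable K : fieldType.

Lemma sub_trmx_kermx r c p (A : 'M[K]_(r, c)) (Q : 'M_(r, p)) :
  (Q^T <= A^T)%MS = (kermx A *m Q == 0).
Proof.
set N := kermx A.
have sub_kerNT p' (B : 'M_(p', r)) : (B <= kermx N^T)%MS = (N *m B^T == 0).
  by rewrite sub_kermx -(inj_eq (@trmx_inj _ _ _)) trmx_mul trmxK trmx0.
have sAN : (A^T <= kermx N^T)%MS by rewrite sub_kerNT trmxK mulmx_ker.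
have /eqmxP -> : (A^T == kermx N^T)%MS.
  rewrite -(mxrank_leqif_eq sAN) !mxrank_ker !mxrank_tr /N mxrank_ker.
  by rewrite (subKn (rank_leq_row A)).
by rewrite sub_kerNT trmxK.
Qed.

Lemma sub_cV_mul p n (c : 'cV[K]_p) (v : 'rV_n) : c != 0 -> (v <= c *m v)%MS.
Proof.
case/cV0Pn => i nz_ci.
have cv_i : row i (c *m v) = c i 0 *: v.
  rewrite row_mul -mul_scalar_mx; congr (_ *m _).
  by apply/rowP => j; rewrite !ord1 !mxE eqxx.
have {1}-> : v = (c i 0)^-1 *: row i (c *m v) by rewrite cv_i scalerA mulVf ?scale1r.
exact: scalemx_sub (row_sub _ _).
Qed.

Lemma row_echelon_lker r c (A : 'M[K]_(r, c)) (y : 'rV_r) j :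
  row_echelon A -> y *m A = 0 -> row j A != 0 -> y 0 j = 0.
Proof.
move=> echA yA0 nz_Aj; apply/eqP/negPn/negP => nz_yj.
pose P i := (y 0 i != 0) && (row i A != 0).
have Pj : P j by rewrite /P nz_yj.
case: (arg_minnP val Pj) => {j Pj nz_yj nz_Aj} j /andP[nz_yj nz_Aj] min_j.
have /rV0Pn[k0] := nz_Aj; rewrite mxE => nz_Ajk0.
case: (@arg_minnP _ k0 (fun k => A j k != 0) val nz_Ajk0) => {k0 nz_Ajk0} k nz_Ajk min_k.
(* [j] is the first nonzero row of [A] with [y 0 j != 0] and [k] its pivot:
   only row [j] contributes to entry [k] of [y *m A]. *)
have := congr1 (fun B : 'rV_c => B 0 k) yA0; rewrite !mxE (bigD1 j) //= big1.
  by rewrite addr0 => /eqP; rewrite mulf_eq0 (negbTE nz_yj) (negbTE nz_Ajk).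
move=> i ne_ij; have [Ai0 | nz_Ai] := eqVneq (row i A) 0.
  by have := congr1 (fun B : 'rV_c => B 0 k) Ai0; rewrite !mxE => ->; rewrite mulr0.
case: (ltngtP i j) => [lt_ij | lt_ji | /val_inj eq_ij].
- have : ~~ P i by apply/negP => /min_j; rewrite leqNgt lt_ij.
  by rewrite /P nz_Ai andbT negbK => /eqP ->; rewrite mul0r.
- have [k1 [nz_Ajk1 Ai0]] := echA j i lt_ji nz_Ai.
  by rewrite Ai0 ?mulr0 // min_k.
- by rewrite eq_ij eqxx in ne_ij.
Qed.

Lemma sub_rows_eq0P r c (Z : {set 'I_r}) (Q : 'M[K]_(r, c)) :
  reflect (forall j, j \in Z -> row j Q = 0) (sub_rows Z Q == 0).
Proof.
apply: (iffP eqP) => [Z0 j Zj | Z0].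
  by have := congr1 (row (enum_rank_in Zj j)) Z0; rewrite row_rowsub enum_rankK_in // row0.
by apply/row_matrixP => k; rewrite row_rowsub row0 Z0 // enum_valP.
Qed.

Lemma row_echelon_col_subE r c p (A : 'M[K]_(r, c)) (Q : 'M_(r, p)) :
  row_echelon A -> (Q^T <= A^T)%MS = (sub_rows (zero_rows A) Q == 0).
Proof.
move=> echA; apply/idP/sub_rows_eq0P => [/submxP[W QW] j | Z0].
  rewrite inE => /eqP Aj0.
  by rewrite -[Q]trmxK QW trmx_mul trmxK row_mul Aj0 mul0mx.
rewrite sub_trmx_kermx; apply/eqP/row_matrixP => i.
rewrite row0 row_mul mulmx_sum_row big1 // => j _.
have [Aj0 | nz_Aj] := eqVneq (row j A) 0; first by rewrite Z0 ?scaler0 // inE Aj0.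
by rewrite (row_echelon_lker echA _ nz_Aj) ?scale0r // -row_mul mulmx_ker row0.
Qed.

Lemma sub_rows_echelon_mulE r n c p (P : 'M[K]_r) (M : 'M_(r, n)) (N : 'M_(n, c))
    (U : 'M_(n, p)) :
  P \in unitmx -> row_echelon (P *m (M *m N)) ->
  (sub_rows (zero_rows (P *m (M *m N))) (P *m M) *m U == 0)
    = ((M *m U)^T <= (M *m N)^T)%MS.
Proof.
move=> unitP echPMN; rewrite /sub_rows mul_rowsub_mx -mulmxA -/(sub_rows _ _).
by rewrite -row_echelon_col_subE // !trmx_mul submxMfree // row_free_unit unitmx_tr.
Qed.

End RowSpaces.

Section BlockEmbedding.
Variables (R : pzRingType) (n : nat) (q_ : 'I_n -> nat).
Local Notation I := (1%:M : 'M[R]_(\sum_j q_ j)).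

Lemma submxblock1 i : submxblock I i i = 1%:M.
Proof. by apply/matrixP => a c; rewrite !mxE -val_eqE tagnat.eq_Rank eqxx. Qed.

Lemma submxblock1_neq i j : i != j -> submxblock I i j = 0.
Proof.
by move=> ne_ij; apply/matrixP => a c; rewrite !mxE -val_eqE tagnat.eq_Rank (negbTE ne_ij).
Qed.

Lemma submxrow_mul_submxcol1 p i (A : 'M[R]_(p, q_ i)) j :
  submxrow (A *m submxcol I i) j = A *m submxblock I i j.
Proof. by rewrite submxblockEv mul_submxrow. Qed.

Lemma mul_tr_submxcol1 p (A : 'M[R]_(p, \sum_j q_ j)) i :
  A *m (submxcol I i)^T = submxrow A i.
Proof. by rewrite tr_submxcol trmx1 mul_submxrow mulmx1. Qed.

Lemma sum_submxrow_submxcol1 p (A : 'M[R]_(p, \sum_j q_ j)) :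
  \sum_i submxrow A i *m submxcol I i = A.
Proof. by rewrite -mul_mxrow_mxcol submxrowK submxcolK mulmx1. Qed.

End BlockEmbedding.

Section Expansion.
Variables (F : finFieldType) (L : fieldExtType F) (m : nat) (b : m.-tuple L).
Hypothesis hb : basis_of fullv b.

Local Notation "A ^L" := (map_mx (in_alg L) A) (at level 2).

Lemma submxcol_ext a c (X : 'M[L]_(a, c)) r :
  submxcol (ext b X) r = \matrix_(l < m, j < c) coord b l (X r j).
Proof. exact: mxcolK. Qed.

Lemma extB a c (X Y : 'M[L]_(a, c)) : ext b (X - Y) = ext b X - ext b Y.
Proof.
rewrite /ext -mxcolB; apply: eq_mxcol => r.
by apply/matrixP => l j; rewrite !mxE linearB.
Qed.

Lemma ext0 a c : ext b (0 : 'M[L]_(a, c)) = 0.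
Proof. by rewrite -{1}(subrr (0 : 'M[L]_(a, c))) extB subrr. Qed.

Lemma ext_eq0 a c (X : 'M[L]_(a, c)) : (ext b X == 0) = (X == 0).
Proof.
apply/eqP/eqP => [X0 | ->]; last exact: ext0.
apply/matrixP => r j; rewrite mxE (coord_basis hb (memvf (X r j))).
apply: big1 => l _.
have := congr1 (fun B => submxcol B r l j) X0.
by rewrite /= submxcol_ext submxcol0 !mxE => ->; rewrite scale0r.
Qed.

Lemma ext_mul_map a c p (X : 'M[L]_(a, c)) (w : 'M[F]_(c, p)) :
  ext b X *m w = ext b (X *m w^L).
Proof.
rewrite /ext mxcol_mul; apply: eq_mxcol => r; apply/matrixP => l j.
rewrite !mxE linear_sum; apply: eq_bigr => k _.
by rewrite !mxE mulr_algr linearZ /= mulrC.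
Qed.

Lemma ext_mul_tr_eq0 a n (X : 'M[L]_(a, n)) (v : 'rV[F]_n) :
  (ext b X *m v^T == 0) = (X *m (v^L)^T == 0).
Proof. by rewrite ext_mul_map map_trmx ext_eq0. Qed.

Lemma coord_mul (y x : L) l :
  coord b l (y * x) = \sum_(l' < m) coord b l (y * b`_l') * coord b l' x.
Proof.
rewrite {1}(coord_basis hb (memvf x)) mulr_sumr linear_sum.
by apply: eq_bigr => l' _; rewrite -scalerAr linearZ /= mulrC.
Qed.

(* In coordinates, multiplication by [y] is the matrix [coord b l (y * b`_l')]. *)
Lemma ext_mul_sub a' a c (Y : 'M[L]_(a', a)) (X : 'M[L]_(a, c)) :
  (ext b (Y *m X) <= ext b X)%MS.
Proof.
have -> : ext b (Y *m X) =
    \mxblock_(r', r) (\matrix_(l < m, l' < m) coord b l (Y r' r * b`_l')) *m ext b X.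
  rewrite /ext mul_mxblock_mxrow; apply: eq_mxcol => r'.
  apply/matrixP => l j; rewrite !mxE summxE linear_sum.
  apply: eq_bigr => r _; rewrite !mxE; apply: (etrans (coord_mul _ _ _)).
  by apply: eq_bigr => l' _; rewrite !mxE.
exact: submxMl.
Qed.

Lemma sub_map_ext a c (X : 'M[L]_(a, c)) : (X <= (ext b X)^L)%MS.
Proof.
apply/submxP; exists (\mxrow_(r < a) \matrix_(r' < a, l < m) ((r' == r)%:R * b`_l)).
have -> : (ext b X)^L = \mxcol_r \matrix_(l < m, j < c) (coord b l (X r j))%:A.
  by apply/matrixP => k j; rewrite !mxE.
rewrite mul_mxrow_mxcol; apply/matrixP => r j.
rewrite summxE (bigD1 r) //= big1 ?addr0 => [|r' ne_r'r].
  rewrite mxE [LHS](coord_basis hb (memvf _)); apply: eq_bigr => l _.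
  by rewrite !mxE eqxx mul1r mulr_algr.
by rewrite mxE big1 // => l _; rewrite !mxE eq_sym (negbTE ne_r'r) !mul0r.
Qed.

Lemma ext_map_row n (v : 'rV[F]_n) : ext b v^L = ext b (1%:M : 'M[L]_1) *m v.
Proof. by rewrite ext_mul_map mul1mx. Qed.

Lemma sub_ext_map_row n (v : 'rV[F]_n) : (v <= ext b v^L)%MS.
Proof. by rewrite ext_map_row sub_cV_mul // ext_eq0 oner_eq0. Qed.

Lemma rkq_mul_le a' a c (Y : 'M[L]_(a', a)) (X : 'M[L]_(a, c)) :
  (rkq b (Y *m X) <= rkq b X)%N.
Proof. exact/mxrankS/ext_mul_sub. Qed.

Lemma rkq_sub_le a c (X Y : 'M[L]_(a, c)) : (rkq b (X - Y) <= rkq b X + rkq b Y)%N.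
Proof. by rewrite /rkq extB -(mxrank_opp (ext b Y)) mxrank_add. Qed.

Lemma rkq_map_row n (v : 'rV[F]_n) : (rkq b v^L <= 1)%N.
Proof. by rewrite /rkq ext_map_row (leq_trans (mxrankM_maxl _ _)) ?rank_leq_col. Qed.

Section SumRank.
Variables (ell : nat) (ns : 'I_ell -> nat).

Lemma sr_weight_sub_le (x y : 'rV[L]_(\sum_i ns i)) :
  (sr_weight b (x - y) <= sr_weight b x + sr_weight b y)%N.
Proof.
rewrite /sr_weight -big_split; apply: leq_sum => i _.
by rewrite submxrowB rkq_sub_le.
Qed.

Lemma sr_weight_mul_mxrow s (w : 'rV[L]_s) (Eb : forall i, 'M[L]_(s, ns i)) :
  (sr_weight b (w *m mxrow Eb) <= \sum_i rkq b (Eb i))%N.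
Proof.
rewrite /sr_weight; apply: leq_sum => i _.
by rewrite -mul_submxrow (mxrowK (q_ := ns) Eb) rkq_mul_le.
Qed.

Lemma sr_weight_map_row i (v : 'rV[F]_(ns i)) :
  (sr_weight b (v^L *m submxcol 1%:M i) <= 1)%N.
Proof.
rewrite /sr_weight (bigD1 i) //= submxrow_mul_submxcol1 submxblock1 mulmx1.
rewrite [X in (_ + X)%N]big1 ?addn0 ?rkq_map_row // => j ne_ji.
rewrite submxrow_mul_submxcol1 submxblock1_neq 1?eq_sym // mulmx0.
by rewrite /rkq ext0 mxrank0.
Qed.

Lemma min_sr_dist_eq (C : pred 'rV[L]_(\sum_i ns i)) d x y :
  min_sr_dist b C d -> C 0 -> C (x - y) ->
  (sr_weight b x + sr_weight b y < d)%N -> x = y.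
Proof.
move=> [_ d_min] C0 Cxy wt_lt; apply/eqP; rewrite -subr_eq0; apply: contraLR wt_lt => nz_xy.
have := d_min _ _ Cxy C0 nz_xy; rewrite /sr_dist subr0 -leqNgt => le_d.
exact: leq_trans le_d (sr_weight_sub_le x y).
Qed.

Section FullRankError.
Variables (s : nat) (Eb : forall i, 'M[L]_(s, ns i)).
Hypothesis rank_Eb : \rank (mxrow Eb) = (\sum_i rkq b (Eb i))%N.

Lemma map_ext_block_sub i : ((ext b (Eb i))^L *m submxcol 1%:M i <= mxrow Eb)%MS.
Proof.
pose G j := (ext b (Eb j))^L *m submxcol 1%:M j.
pose W := (\sum_j <<G j>>)%MS.
have sEW : (mxrow Eb <= W)%MS.
  rewrite -[mxrow Eb]sum_submxrow_submxcol1; apply/summx_sub => j _.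
  apply: submx_trans (sumsmx_sup j _ _) => //.
  by rewrite genmxE mxrowK submxMr // sub_map_ext.
have rkW : (\rank W <= \rank (mxrow Eb))%N.
  rewrite rank_Eb; apply: leq_trans (mxrank_sum_leqif _).1 _.
  apply: leq_sum => j _; rewrite /= mxrank_gen.
  by apply: leq_trans (mxrankM_maxl _ _) _; rewrite mxrank_map.
have sWE : (W <= mxrow Eb)%MS by rewrite -(mxrank_leqif_sup sEW) eqn_leq rkW mxrankS.
by apply: submx_trans sWE; rewrite (sumsmx_sup i) // genmxE.
Qed.

Lemma ext_block_orthogonal p (X : 'M[L]_(p, \sum_i ns i)) i (v : 'rV[F]_(ns i)) :
  X *m (mxrow Eb)^T = 0 -> (v <= ext b (Eb i))%MS -> submxrow X i *m (v^L)^T = 0.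
Proof.
move=> XE0 sv; have /submxP[D GD] := map_ext_block_sub i.
have /submxP[D' ->] : (v^L <= (ext b (Eb i))^L)%MS by rewrite map_submx.
have XG : X *m ((ext b (Eb i))^L *m submxcol 1%:M i)^T = 0.
  by rewrite GD trmx_mul mulmxA XE0 mul0mx.
by rewrite trmx_mul mulmxA -mul_tr_submxcol1 -(mulmxA X) -trmx_mul XG mul0mx.
Qed.

End FullRankError.

End SumRank.

End Expansion.

Unset Implicit Arguments. Set Strict Implicit. Set Printing Implicit Defensive.

Theorem theorem1
  (F : finFieldType) (L : fieldExtType F) (m : nat) (b : m.-tuple L)
  (hb : basis_of fullv b)
  (ell : nat) (ns : 'I_ell -> nat) (hns : forall i, (0 < ns i)%N)
  (k d s : nat) (hs : (0 < s)%N) (hk : (k <= \sum_i ns i)%N)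
  (Hb : forall i : 'I_ell, 'M[L]_(\sum_i ns i - k, ns i))
  (hH : \rank (mxrow Hb) = (\sum_i ns i - k)%N)
  (hd : min_sr_dist b (fun x => mxrow Hb *m x^T == 0) d)
  (Eb : forall i : 'I_ell, 'M[L]_(s, ns i))
  (ht : ((\sum_(i < ell) rkq b (Eb i)) + 2 <= d)%N)
  (P : 'M[L]_(\sum_i ns i - k)) (hP : P \in unitmx)
  (hPS : row_echelon (P *m (mxrow Hb *m (mxrow Eb)^T)))
  (hst : (\sum_(i < ell) rkq b (Eb i) <= s)%N)
  (hrk : \rank (mxrow Eb) = (\sum_(i < ell) rkq b (Eb i))%N) :
  let Hsub := sub_rows (zero_rows (P *m (mxrow Hb *m (mxrow Eb)^T))) (P *m mxrow Hb) in
  forall (i : 'I_ell) (v : 'rV[F]_(ns i)),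
    (v <= ext b (Eb i))%MS = (ext b (submxrow Hsub i) *m v^T == 0).
Proof.
move=> Hsub i v; set H := mxrow Hb; set E := mxrow Eb.
have HsubE p (U : 'M_(\sum_i ns i, p)) :
    (Hsub *m U == 0) = ((H *m U)^T <= (H *m E^T)^T)%MS.
  exact: sub_rows_echelon_mulE.
rewrite ext_mul_tr_eq0 //; apply/idP/eqP => [sv | Hsub_v].
  have HE : Hsub *m E^T = 0 by apply/eqP; rewrite HsubE.
  exact: (ext_block_orthogonal hb hrk HE sv).
pose x := map_mx (in_alg L) v *m submxcol 1%:M i.
have /submxP[w Hx] : ((H *m x^T)^T <= (H *m E^T)^T)%MS.
  by rewrite -HsubE trmx_mul (mulmxA Hsub) mul_tr_submxcol1 Hsub_v.
have x_wE : x = w *m E.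
  apply: (min_sr_dist_eq hd).
  - by rewrite /= trmx0 mulmx0.
  - by rewrite /= linearB /= mulmxBr -[H *m x^T]trmxK Hx !trmx_mul !trmxK mulmxA subrr.
  - rewrite addn2 in ht; apply: leq_ltn_trans ht.
    exact: leq_add (sr_weight_map_row b v) (sr_weight_mul_mxrow hb w Eb).
have vL : map_mx (in_alg L) v = w *m Eb i.
  rewrite -[LHS]mulmx1 -(submxblock1 _ ns i) -submxrow_mul_submxcol1 -/x x_wE.
  by rewrite -mul_submxrow mxrowK.
by apply: submx_trans (sub_ext_map_row hb v) _; rewrite vL ext_mul_sub.
Qed.
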